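(* Let $w\in F$ and suppose $w=a_1a_2\cdots a_k$ with $k\ge1$, where for each $i$ either $a_i$ or $a_i^{-1}$ belongs to $\{x_0,x_1,x_2,\dots\}$, and suppose that for each $i<k$, if $a_i=x_r^{\pm1}$ then $a_{i+1}=x_{r+1}^{\pm1}$ or $a_{i+1}=x_{r-1}^{\pm1}$. Then $w\neq 1$ in $F$.
   Context: $F$ is Thompson's group with infinite presentation $\langle x_k,\ k\ge0 \mid x_i^{-1}x_jx_i=x_{j+1}\text{ for } i<j\rangle$. *)

From mathcomp Require Import all_boot.
Set Implicit Arguments. Unset Strict Implicit. Unset Printing Implicit Defensive.

(* Elements are represented by words over the letters x_k^{±1};
   a letter is a pair (k, b) standing for x_k if b = false and x_k^{-1}
   if b = true. *)

Definition letter := (nat * bool)%type.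
Definition word := seq letter.

Definition gen (k : nat) : letter := (k, false).
Definition geninv (k : nat) : letter := (k, true).

Inductive F_eq : word -> word -> Prop :=
| F_refl u : F_eq u u
| F_sym u v : F_eq u v -> F_eq v u
| F_trans u v w : F_eq u v -> F_eq v w -> F_eq u w
| F_ctx p s u v : F_eq u v -> F_eq (p ++ u ++ s) (p ++ v ++ s)
| F_cancel_r k : F_eq [:: gen k; geninv k] [::]
| F_cancel_l k : F_eq [:: geninv k; gen k] [::]
| F_rel i j : i < j -> F_eq [:: geninv i; gen j; gen i] [:: gen j.+1].

Definition F_trivial (w : word) : Prop := F_eq w [::].

From mathcomp Require Import all_boot zify.
From Stdlib Require Import FunctionalExtensionality.
Set Implicit Arguments. Unset Strict Implicit. Unset Printing Implicit Defensive.

(* F acts on infinite binary sequences by its standard action (x_0 : 0a -> 00a,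
   10a -> 01a, 11a -> 1a, and x_n applies x_0 after the prefix 1^n), so a
   word that is trivial in F acts trivially.  Let w be a nonempty word whose
   consecutive subscripts differ by one, and m its least subscript.  Acting on
   1^m 0^(J+1) 1 0 0 ... shows that x_m and x_m^-1 occur equally often in w,
   say K times each.  Pushing x_m^-K through w with x_m^-1 x_j = x_(j+1) x_m^-1
   (j > m) gives x_m^-K w = w' x_m^-K, where w' deletes the letters x_m^(+-1)
   and raises the other subscripts by the current height.  So w' also acts
   trivially; it still has adjacent subscripts, is shorter, and is nonempty
   because two consecutive letters cannot both have subscript m. *)

(* (p, f) stands for the sequence 1^p 0 f(0) f(1) ...; the sequence 1 1 1 ...
   is fixed by F and left out. *)
Definition state := (nat * (nat -> bool))%type.

Definition scons (b : bool) (f : nat -> bool) : nat -> bool :=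
  fun i => if i is k.+1 then f k else b.
Definition stail (f : nat -> bool) : nat -> bool := fun i => f i.+1.

Lemma scons_stail f : scons (f 0) (stail f) = f.
Proof. by apply: functional_extensionality => -[]. Qed.

Definition step (a : letter) (s : state) : state :=
  let: (n, inv) := a in let: (p, f) := s in
  if p < n then s
  else if ~~ inv then
    if p == n then (n, scons false f)
    else if p == n.+1 then (n, scons true f) else (p.-1, f)
  else if p == n then (if f 0 then (n.+1, stail f) else (n, stail f))
  else (p.+1, f).

Definition act (w : word) (s : state) : state := foldr step s w.

Lemma act_cat u v s : act (u ++ v) s = act u (act v s).
Proof. by rewrite /act foldr_cat. Qed.

Ltac case_innermost_if :=
  match goal with |- context [if ?c then _ else _] =>
    lazymatch c with context [if _ then _ else _] => fail | _ =>
      let H := fresh "H" in case H: c => /= end end.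

Ltac solve_step :=
  rewrite /act /step /=; repeat case_innermost_if; try lia; try congruence;
  f_equal; try lia; try (symmetry; exact: scons_stail);
  match goal with H : ?f 0 = _ |- _ => by rewrite -H scons_stail end.

Lemma act_cancel_r k s : act [:: gen k; geninv k] s = s.
Proof. case: s => p f; solve_step. Qed.

Lemma act_cancel_l k s : act [:: geninv k; gen k] s = s.
Proof. case: s => p f; solve_step. Qed.

Lemma act_rel i j s :
  i < j -> act [:: geninv i; gen j; gen i] s = act [:: gen j.+1] s.
Proof. case: s => p f ij; solve_step. Qed.

Lemma act_F_eq u v : F_eq u v -> forall s, act u s = act v s.
Proof.
elim=> {u v} [//|u v _ IH s|u v w _ IH1 _ IH2 s|p s u v _ IH t|k s|k s|
  i j ij s].
- by rewrite IH.
- by rewrite IH1 IH2.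
- by rewrite !act_cat IH.
- exact: act_cancel_r.
- exact: act_cancel_l.
- exact: act_rel.
Qed.

Lemma act_surj u t : exists s, act u s = t.
Proof.
elim: u t => [|[k inv] u IH] t; first by exists t.
have [s' Hs'] : exists s', step (k, inv) s' = t.
  case: inv; [exists (step (gen k) t); exact: act_cancel_l
             | exists (step (geninv k) t); exact: act_cancel_r].
by have [s Hs] := IH s'; exists s; rewrite -Hs' -Hs.
Qed.

Definition acts_trivially (w : word) := forall s, act w s = s.

Lemma acts_trivially_conj u w w' :
  F_eq (u ++ w) (w' ++ u) -> acts_trivially w -> acts_trivially w'.
Proof.
move=> Huw Hw t; have [s <-] := act_surj u t.
by rewrite -act_cat -(act_F_eq Huw) act_cat Hw.
Qed.

Lemma F_eq_catl p u v : F_eq u v -> F_eq (p ++ u) (p ++ v).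
Proof. by move=> H; have := F_ctx p [::] H; rewrite !cats0. Qed.

Lemma F_eq_catr s u v : F_eq u v -> F_eq (u ++ s) (v ++ s).
Proof. exact: (F_ctx [::] s). Qed.

Lemma F_geninv_comm m j inv : m < j ->
  F_eq [:: geninv m; (j, inv)] [:: (j.+1, inv); geninv m].
Proof.
move=> mj; case: inv.
- apply: (@F_trans _ [:: geninv j.+1; gen j.+1; geninv m; geninv j]).
    apply: F_sym; exact: (F_ctx [::] [:: geninv m; geninv j] (F_cancel_l j.+1)).
  apply: (@F_trans _
    [:: geninv j.+1; geninv m; gen j; gen m; geninv m; geninv j]).
    exact: (F_ctx [:: geninv j.+1] [:: geninv m; geninv j] (F_sym (F_rel mj))).
  apply: (@F_trans _ [:: geninv j.+1; geninv m; gen j; geninv j]).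
    exact: (F_ctx [:: geninv j.+1; geninv m; gen j] [:: geninv j]
                  (F_cancel_r m)).
  exact: (F_ctx [:: geninv j.+1; geninv m] [::] (F_cancel_r j)).
- apply: (@F_trans _ [:: geninv m; gen j; gen m; geninv m]).
    apply: F_sym; exact: (F_ctx [:: geninv m; gen j] [::] (F_cancel_r m)).
  exact: (F_ctx [::] [:: geninv m] (F_rel mj)).
Qed.

Lemma F_geninvn_comm m h j inv : m < j ->
  F_eq (nseq h (geninv m) ++ [:: (j, inv)]) ((j + h, inv) :: nseq h (geninv m)).
Proof.
elim: h j => [|h IH] j mj /=; first by rewrite addn0; apply: F_refl.
apply: F_trans (F_eq_catl [:: geninv m] (IH j mj)) _.
by rewrite addnS; apply: (F_eq_catr _ (F_geninv_comm inv _)); lia.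
Qed.

Lemma cat_nseq_cons (T : Type) h (x : T) s :
  nseq h x ++ x :: s = nseq h.+1 x ++ s.
Proof. by elim: h => //= h ->. Qed.

Section StripGenerator.

Variable m : nat.

Definition subscripts_ge (w : word) := all (fun a : letter => m <= a.1) w.

Definition num_gen (w : word) := count (fun a : letter => a == gen m) w.
Definition num_geninv (w : word) := count (fun a : letter => a == geninv m) w.

Lemma num_gen_cons n inv w :
  num_gen ((n, inv) :: w) = ((n == m) && ~~ inv) + num_gen w.
Proof. by rewrite /num_gen /= xpair_eqE; case: inv. Qed.

Lemma num_geninv_cons n inv w :
  num_geninv ((n, inv) :: w) = ((n == m) && inv) + num_geninv w.
Proof. by rewrite /num_geninv /= xpair_eqE; case: inv. Qed.

(* h is the number of letters x_m^-1 standing in front of the rest of w, so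
   x_n^(+-1) with n > m becomes x_(n+h)^(+-1) when they are pushed past it. *)
Fixpoint strip (w : word) (h : nat) : word :=
  if w is a :: w' then
    if a.1 == m then strip w' (if a.2 then h.+1 else h.-1)
    else (a.1 + h, a.2) :: strip w' h
  else [::].

Lemma F_eq_strip w h : subscripts_ge w -> num_gen w <= h ->
  F_eq (nseq h (geninv m) ++ w)
       (strip w h ++ nseq (h + num_geninv w - num_gen w) (geninv m)).
Proof.
elim: w h => [|[n inv] w IH] h.
  by rewrite /= cats0 /num_gen /num_geninv addn0 subn0 => _ _; apply: F_refl.
rewrite num_gen_cons num_geninv_cons /= => /andP[mn aw].
case: (eqVneq n m) => [->|nm] /=.
- case: inv => /= hw.
  + rewrite cat_nseq_cons addnS -addSn; apply: IH => //; lia.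
  + case: h hw => [|h] hw; first lia.
    rewrite -cat_nseq_cons -cat1s.
    apply: F_trans (F_ctx _ w (F_cancel_l m)) _.
    rewrite add1n addSn subSS; apply: IH => //; lia.
- move=> hw; have mn' : m < n by lia.
  rewrite -[_ :: w]cat1s catA.
  apply: F_trans (F_eq_catr w (F_geninvn_comm h inv mn')) _.
  by apply: (F_eq_catl [:: (n + h, inv)]); apply: IH.
Qed.

(* (m, marker J) is 1^m 0^(J+1) 1 0 0 ...: x_m^(+-1) moves the 1 by one place
   and larger subscripts fix the sequence. *)
Definition marker (J : nat) : nat -> bool := fun i => i == J.

Lemma act_marker w J : subscripts_ge w -> num_geninv w <= J ->
  act w (m, marker J) = (m, marker (J + num_gen w - num_geninv w)).
Proof.
elim: w J => [|[n inv] w IH] J.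
  by rewrite /num_gen /num_geninv addn0 subn0.
rewrite num_gen_cons num_geninv_cons /= => /andP[mn aw].
case: (eqVneq n m) => [->|nm] /= hw; rewrite IH //; try lia.
- rewrite ltnn eqxx; case: inv hw => /= hw.
  + rewrite {1}/marker ifN; last lia.
    congr (_, _); apply: functional_extensionality => i.
    by rewrite /stail /marker; lia.
  + congr (_, _); apply: functional_extensionality => -[|i];
      by rewrite /scons /marker; lia.
- by rewrite ifT ?add0n; last lia.
Qed.

Lemma num_gen_eq_trivial w :
  subscripts_ge w -> acts_trivially w -> num_gen w = num_geninv w.
Proof.
move=> aw triv.
have hJ : num_geninv w <= size w by exact: count_size.
have := triv (m, marker (size w)); rewrite act_marker // => -[].
move/(congr1 (fun f => f (size w))); rewrite /marker eqxx => /eqP; lia.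
Qed.

Definition adjacent (a b : letter) : bool := (b.1 == a.1.+1) || (b.1.+1 == a.1).

Lemma strip_path x w h :
  m < x.1 -> subscripts_ge w -> num_gen w <= h -> path adjacent x w ->
  path adjacent (x.1 + h, x.2) (strip w h).
Proof.
elim: w x h => [//|[n inv] w IH] x h mx.
rewrite num_gen_cons /= => /andP[mn aw] hw /andP[xa pw].
case: (eqVneq n m) => [nm|nm] /=; last first.
  apply/andP; split; first by move: xa; rewrite /adjacent /=; lia.
  by apply: (IH (n, inv)) => //=; lia.
move: hw xa; rewrite nm eqxx /adjacent /= => hw xa.
case: w IH aw hw pw => [//|[d dinv] w] IH /= /andP[md aw] hw /andP[ab pw].
have dm : d = m.+1 by move: ab; rewrite /adjacent /= nm; lia.
subst d; have Sm : (m.+1 == m) = false by lia.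
set h' := if inv then h.+1 else h.-1.
have hw' : num_gen ((m.+1, dinv) :: w) <= h'.
  by rewrite /h'; case: (inv) hw => /=; lia.
rewrite Sm /=; apply/andP; split.
  by rewrite /h'; case: (inv) hw => /=; lia.
(* any predecessor of the letter x_(m+1) lets the induction hypothesis see
   the tail of the stripped word *)
have hpath : path adjacent (m.+2, false) ((m.+1, dinv) :: w).
  by rewrite /= /adjacent /= eqxx orbT.
have am : subscripts_ge ((m.+1, dinv) :: w).
  by apply/andP; split; [exact: leqnSn | exact: aw].
have := IH (m.+2, false) h' (leqnSn m.+1) am hw' hpath.
by rewrite /= Sm => /andP[].
Qed.

Lemma strip_sorted w h :
  subscripts_ge w -> num_gen w <= h -> sorted adjacent w ->
  sorted adjacent (strip w h).
Proof.
case: w => [//|a w] aw hw sw.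
apply: (@path_sorted _ adjacent (a.1.+1 + h, false)).
apply: (strip_path (x := (a.1.+1, false))) => //=.
  by move: aw => /andP[].
by rewrite /adjacent /= eqxx orbT.
Qed.

Lemma size_strip w h : size (strip w h) + num_gen w + num_geninv w = size w.
Proof.
elim: w h => [//|[n inv] w IH] h.
rewrite num_gen_cons num_geninv_cons /=.
case: (eqVneq n m) => [_|_] /=; last by have := IH h; lia.
by case: inv; [have := IH h.+1 | have := IH h.-1] => /=; lia.
Qed.

Lemma size_strip_gt0 w h :
  sorted adjacent w -> 1 < size w -> 0 < size (strip w h).
Proof.
case: w => [//|[n inv] [//|[d dinv] w]] /= /andP[nd _] _.
case: (eqVneq n m) => [nm|//] /=.
by have -> : (d == m) = false by move: nd; rewrite /adjacent /= nm; lia.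
Qed.

Lemma num_gen_geninv_gt0 w : has (fun a : letter => a.1 == m) w ->
  0 < num_gen w + num_geninv w.
Proof.
elim: w => [//|[n inv] w IH].
rewrite num_gen_cons num_geninv_cons /=.
case: (eqVneq n m) => [_|_] /=; last lia.
by case: inv => _ /=; lia.
Qed.

End StripGenerator.

Lemma exists_min_index (w : word) : 0 < size w ->
  exists2 m, has (fun a : letter => a.1 == m) w & subscripts_ge m w.
Proof.
case: w => [//|a w] _.
have hex : exists k, has (fun b : letter => b.1 == k) (a :: w).
  by exists a.1; rewrite /= eqxx.
case: (ex_minnP hex) => m hm hmin; exists m => //.
by apply/allP => b bw; apply: hmin; apply/hasP; exists b.
Qed.

Lemma sorted_adjacent_nontrivial w :
  0 < size w -> sorted adjacent w -> ~ acts_trivially w.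
Proof.
move: {2}(size w) (leqnn (size w)) => n.
elim: n w => [|n IHn] w wn w0 sw triv; first lia.
have [m hm am] := exists_min_index w0.
have [K Kp Kn] : exists2 K, num_gen m w = K & num_geninv m w = K.
  by exists (num_gen m w); last exact: esym (num_gen_eq_trivial am triv).
have Fw : F_eq (nseq K (geninv m) ++ w) (strip m w K ++ nseq K (geninv m)).
  by have := F_eq_strip am (eq_leq Kp); rewrite Kp Kn addnK.
have := size_strip m w K; have := num_gen_geninv_gt0 hm.
rewrite Kp Kn => K0 hsz.
apply: (IHn (strip m w K)); first lia.
- by apply: size_strip_gt0; lia.
- by apply: strip_sorted; rewrite ?Kp.
- exact: acts_trivially_conj Fw triv.
Qed.

Theorem lemma3p3 (w : word) :
  0 < size w ->
  (forall i, i.+1 < size w ->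
     let r := (nth (0, false) w i).1 in
     let s := (nth (0, false) w i.+1).1 in
     s = r.+1 \/ s.+1 = r) ->
  ~ F_trivial w.
Proof.
move=> w0 hadj wtriv; apply: (sorted_adjacent_nontrivial w0).
- apply/(sortedP (0, false)) => i hi; rewrite /adjacent.
  by case: (hadj i hi) => /= ->; rewrite eqxx ?orbT.
- by move=> s; exact: (act_F_eq wtriv s).
Qed.
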